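(* Let $K\ge 2$ and let $r\in[0,1]^K$ satisfy $r(1)>r(2)>\cdots>r(K)$. Fix a sub-optimal arm $j\in\{2,\ldots,K\}$. For a policy $\pi=\pi_\theta$ write $\varepsilon:=1-\pi(j)$ and $p_a:=\pi(a)$. There exists $\varepsilon_0>0$, depending on the reward gaps and $K$, such that for all $\varepsilon\in(0,\varepsilon_0)$: if $p_1\ge \varepsilon/K$, then under the enlightened gradient (EG) flow \[ \dot\theta(1)-\dot\theta(j)\;\ge\;\frac{\Delta_{1j}}{4K}\,\varepsilon . \]
   Context: $K$-armed bandit: the policy is parameterized by logits $\theta\in\mathbb{R}^K$ via the softmax $\pi_\theta(a)=e^{\theta(a)}/\sum_{a'}e^{\theta(a')}$. The advantage is $U(a):=r(a)-\pi_\theta^\top r$, and $\Delta_{ab}:=r(a)-r(b)$. A gated policy-gradient flow with weights $w(a)\ge 0$ is $\dot\theta(a)=\sum_{a'=1}^K w(a')\,\pi(a')\,U(a')\,(\mathbf{1}\{a=a'\}-\pi(a))$. The enlightened gradient (EG) flow is the case $w(a)=\mathbf{1}\{U(a)>0\}$. *)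

From HB Require Import structures.
From mathcomp Require Import all_boot all_order all_algebra.
From mathcomp Require Import all_classical all_reals all_analysis.
Set Implicit Arguments. Unset Strict Implicit. Unset Printing Implicit Defensive.
Import Order.TTheory GRing.Theory Num.Theory.
Local Open Scope ring_scope.

(* Arms are indexed by 'I_K (arm a of the paper is index a-1). *)

Definition softmax {R : realType} {K : nat} (theta : 'I_K -> R) (a : 'I_K) : R :=
  expR (theta a) / \sum_(b < K) expR (theta b).

Definition adv {R : realType} {K : nat} (r theta : 'I_K -> R) (a : 'I_K) : R :=
  r a - \sum_(b < K) softmax theta b * r b.

Definition gated_flow {R : realType} {K : nat} (w r theta : 'I_K -> R) (a : 'I_K) : R :=
  \sum_(a' < K) w a' * softmax theta a' * adv r theta a'
                 * ((a == a')%:R - softmax theta a).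

Definition EG_weights {R : realType} {K : nat} (r theta : 'I_K -> R) (a : 'I_K) : R :=
  if 0 < adv r theta a then 1 else 0.

Definition EG_flow {R : realType} {K : nat} (r theta : 'I_K -> R) (a : 'I_K) : R :=
  gated_flow (EG_weights r theta) r theta a.

From HB Require Import structures.
From mathcomp Require Import all_boot all_order all_algebra.
From mathcomp Require Import all_classical all_reals all_analysis.
From mathcomp Require Import ring lra.
Import Order.TTheory GRing.Theory Num.Theory.
Local Open Scope ring_scope.

(* Write c_b := w(b) pi(b) U(b), so that the gated flow is
   thetadot(a) = c_a - pi(a) sum_b c_b.  Under EG every c_b is nonnegative, so
   when pi(1) <= pi(j) the difference thetadot(1) - thetadot(j) is at least
   c_1 (1 + pi(j) - pi(1)) - c_j (1 - pi(j) + pi(1)) >= c_1 - 2 eps c_j.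
   The optimal arm has U(1) >= pi(j) Delta_1j > 0, hence
   c_1 = pi(1) U(1) >= (eps/K)(1 - eps) Delta_1j, while rewards in [0,1] give
   c_j <= U(j)^+ <= eps.  For eps <= min(1/4, Delta_1j/(4K)) the first term
   wins by eps Delta_1j/(4K). *)

Lemma pair_le_sum (R : numDomainType) (I : finType) (F : I -> R) (a b : I) :
  a != b -> (forall i, 0 <= F i) -> F a + F b <= \sum_i F i.
Proof.
move=> neq_ab F_ge0; rewrite (bigD1 a) //= (bigD1 b) 1?eq_sym //= addrA lerDl.
exact: sumr_ge0.
Qed.

Section Softmax.
Context {R : realType} {K : nat}.
Implicit Types (theta r w : 'I_K -> R) (a b j : 'I_K).

Lemma softmax_ge0 theta a : 0 <= softmax theta a.
Proof.
rewrite divr_ge0 ?expR_ge0 //.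
by apply: sumr_ge0 => i _; rewrite expR_ge0.
Qed.

Lemma sum_softmax theta a : \sum_b softmax theta b = 1.
Proof.
have sum_gt0 : 0 < \sum_b expR (theta b).
  rewrite (bigD1 a) //= ltr_pwDl ?expR_gt0 //.
  by apply: sumr_ge0 => i _; rewrite expR_ge0.
by rewrite -mulr_suml divff // lt0r_neq0.
Qed.

Lemma softmax_le1 theta a : softmax theta a <= 1.
Proof.
rewrite -(sum_softmax theta a) (bigD1 a) //= lerDl.
by apply: sumr_ge0 => i _; exact: softmax_ge0.
Qed.

Lemma softmax_add_le1 theta {a b} :
  a != b -> softmax theta a + softmax theta b <= 1.
Proof.
move=> neq_ab; rewrite -(sum_softmax theta a) pair_le_sum // => i.
exact: softmax_ge0.
Qed.

Lemma advE r theta a : adv r theta a = \sum_b softmax theta b * (r a - r b).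
Proof.
under eq_bigr => b _ do rewrite mulrBr.
by rewrite sumrB -mulr_suml (sum_softmax theta a) mul1r.
Qed.

Lemma adv_ge_gap r theta a j :
  (forall b, r b <= r a) -> softmax theta j * (r a - r j) <= adv r theta a.
Proof.
move=> r_le; rewrite advE (bigD1 j) //= lerDl sumr_ge0 // => i _.
by rewrite mulr_ge0 ?softmax_ge0 ?subr_ge0.
Qed.

Lemma adv_le_compl r theta j :
  (forall b, 0 <= r b <= 1) -> adv r theta j <= 1 - softmax theta j.
Proof.
move=> r01; rewrite advE (bigD1 j) //= subrr mulr0 add0r.
have -> : 1 - softmax theta j = \sum_(i | i != j) softmax theta i.
  by rewrite -(sum_softmax theta j) (bigD1 j) //= addrC addrK.
apply: ler_sum => i _; rewrite ler_piMr ?softmax_ge0 //.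
by have := r01 i; have := r01 j; lra.
Qed.

Definition weighted_adv w r theta b := w b * softmax theta b * adv r theta b.

Lemma gated_flowE w r theta a :
  gated_flow w r theta a =
  weighted_adv w r theta a - softmax theta a * \sum_b weighted_adv w r theta b.
Proof.
rewrite /gated_flow; under eq_bigr => i _ do rewrite mulrBr.
rewrite sumrB mulr_sumr; congr (_ - _); last first.
  by apply: eq_bigr => i _; rewrite mulrC.
rewrite (bigD1 a) //= eqxx mulr1 big1 ?addr0 // => i /negbTE.
by rewrite eq_sym => ->; rewrite mulr0.
Qed.

Lemma gated_flow_sub_ge {w r theta a j} :
  (forall b, 0 <= weighted_adv w r theta b) -> a != j ->
  softmax theta a <= softmax theta j ->
  weighted_adv w r theta a * (1 + softmax theta j - softmax theta a)
  - weighted_adv w r theta j * (1 - softmax theta j + softmax theta a)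
  <= gated_flow w r theta a - gated_flow w r theta j.
Proof.
move=> c_ge0 neq_aj le_pa_pj; rewrite !gated_flowE.
set c := weighted_adv w r theta; set S := \sum_b c b.
have pair_le_S : c a + c j <= S by exact: pair_le_sum.
have pj_sub_ge0 : 0 <= softmax theta j - softmax theta a by rewrite subr_ge0.
have := ler_wpM2l pj_sub_ge0 pair_le_S.
lra.
Qed.

Lemma EG_weighted_adv_ge0 r theta b :
  0 <= weighted_adv (EG_weights r theta) r theta b.
Proof.
rewrite /weighted_adv /EG_weights.
case: ifP => [/ltW U_ge0|_]; last by rewrite !mul0r.
by rewrite mul1r mulr_ge0 ?softmax_ge0.
Qed.

Lemma EG_weighted_adv_pos r theta b :
  0 < adv r theta b ->
  weighted_adv (EG_weights r theta) r theta b = softmax theta b * adv r theta b.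
Proof. by move=> U_gt0; rewrite /weighted_adv /EG_weights U_gt0 mul1r. Qed.

Lemma EG_weighted_adv_le_compl r theta j :
  (forall b, 0 <= r b <= 1) ->
  weighted_adv (EG_weights r theta) r theta j <= 1 - softmax theta j.
Proof.
move=> r01; rewrite /weighted_adv /EG_weights.
case: ifP => [U_gt0|_]; last by rewrite !mul0r subr_ge0 softmax_le1.
rewrite mul1r (le_trans _ (adv_le_compl r theta j r01)) //.
by rewrite ler_piMl ?softmax_le1 ?ltW.
Qed.

End Softmax.

Lemma gated_gap_arith {R : realFieldType} {eps q pj c1 cj t : R} :
  0 < eps -> eps <= 1 / 4 -> eps <= t / 4 -> pj = 1 - eps -> 0 <= q <= eps ->
  0 <= cj <= eps -> eps * (1 - eps) * t <= c1 ->
  t / 4 * eps <= c1 * (1 + pj - q) - cj * (1 - pj + q).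
Proof.
move=> eps_gt0 eps_le eps_le_t -> /andP[q_ge0 q_le] /andP[cj_ge0 cj_le_eps] c1_ge.
have t_ge0 : 0 <= t by lra.
have cj_le : cj * (eps + q) <= eps * (2 * eps) by apply: ler_pM; lra.
have c1_le : c1 <= c1 * (2 - eps - q).
  by rewrite ler_peMr ?(le_trans _ c1_ge) ?mulr_ge0 //; lra.
have : t / 4 <= (1 - eps) * t - 2 * eps.
  by have := ler_wpM2r t_ge0 eps_le; lra.
move=> /(ler_wpM2l (ltW eps_gt0)).
lra.
Qed.

Theorem theorem1 (R : realType) (K : nat) (hK : (2 <= K)%N)
  (r : 'I_K -> R)
  (hr01 : forall a, 0 <= r a <= 1)
  (hdec : forall a b : 'I_K, (a < b)%N -> r b < r a)
  (a1 : 'I_K) (ha1 : nat_of_ord a1 = 0%N)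
  (j : 'I_K) (hj : (0 < nat_of_ord j)%N) :
  exists eps0 : R, 0 < eps0 /\
    forall theta : 'I_K -> R,
      let eps := 1 - softmax theta j in
      0 < eps -> eps < eps0 ->
      eps / K%:R <= softmax theta a1 ->
      (r a1 - r j) / (4 * K%:R) * eps <= EG_flow r theta a1 - EG_flow r theta j.
Proof.
set gap := r a1 - r j.
have gap_gt0 : 0 < gap by rewrite subr_gt0 hdec // ha1.
have K_gt0 : 0 < K%:R :> R by rewrite ltr0n (leq_trans _ hK).
have neq_a1j : a1 != j by apply/eqP => eq_a1j; move: hj; rewrite -eq_a1j ha1.
have r_le_a1 b : r b <= r a1.
  have [->|neq_b] := eqVneq b a1; first exact: lexx.
  by rewrite ltW // hdec // ha1 lt0n -ha1 (inj_eq val_inj).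
have gap_K : gap / (4 * K%:R) = gap / K%:R / 4 by rewrite invfM mulrA mulrAC.
exists (Num.min (1 / 4) (gap / (4 * K%:R))); split.
  by rewrite lt_min gap_K !divr_gt0 // andbT; lra.
move=> theta eps eps_gt0; rewrite lt_min gap_K => /andP[eps_lt eps_lt_t] p1_ge.
have pj_eq : softmax theta j = 1 - eps by rewrite /eps opprB addrC subrK.
have p1_le : softmax theta a1 <= eps.
  by have := softmax_add_le1 theta neq_a1j; lra.
have U1_ge : (1 - eps) * gap <= adv r theta a1.
  by rewrite -pj_eq; exact: adv_ge_gap.
have U1_gt0 : 0 < adv r theta a1.
  by apply: lt_le_trans U1_ge; rewrite mulr_gt0 //; lra.
have p1_le_pj : softmax theta a1 <= softmax theta j by lra.
have := gated_flow_sub_ge (EG_weighted_adv_ge0 r theta) neq_a1j p1_le_pj.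
rewrite EG_weighted_adv_pos //; apply: le_trans.
apply: (gated_gap_arith eps_gt0 (ltW eps_lt) (ltW eps_lt_t) pj_eq).
- by rewrite softmax_ge0 p1_le.
- by rewrite EG_weighted_adv_ge0 /eps EG_weighted_adv_le_compl.
- have -> : eps * (1 - eps) * (gap / K%:R) = eps / K%:R * ((1 - eps) * gap) by ring.
  by apply: ler_pM p1_ge U1_ge; rewrite ?divr_ge0 ?mulr_ge0 ?ltW //; lra.
Qed.
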